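(* Let $d\in(0,1]$ and $\kappa>0$, and let $L_d$, $E$ and $D(L_d)$ be as in the context. (Parabolic version) If $u\in C(\mathbb{R}^+,D(L_d))$ satisfies $u_t-L_d u\ge 0$ in $\mathbb{R}^+\times[0,1]^2$ and $u(0,x)=f(x)\ge 0$ for $x\in[0,1]^2$, then $u(t,x)\ge 0$ for all $t\ge0$, $x\in[0,1]^2$. (Elliptic version) If $u\in D(L_d)$ satisfies $-L_d u\ge 0$ in $[0,1]^2$, then $u(x)\ge 0$ for all $x\in[0,1]^2$.
   Context: Let $\mathcal D=[0,1]^2$, $M=\begin{pmatrix} d & -d\\ -1 & 1\end{pmatrix}$, and $$L_d u(x)=\frac{x_1(1-x_1)}{2}u_{x_1x_1}(x)+\frac{x_2(1-x_2)}{2d}u_{x_2x_2}(x)-\kappa\, Mx\cdot\nabla u(x).$$ Let $E=\{f\in C(\mathcal D): f(0,0)=f(1,1)=0\}$ with the sup norm. For $N$ with $N_2=dN$ an integer, let $N_1=N$, $\delta t=1/N$, $A=\mathrm{Id}-\frac{\kappa}{N}M$, and $$B_N(g)(x)=\sum_{j_1=0}^{N_1}\sum_{j_2=0}^{N_2}\binom{N_1}{j_1}\binom{N_2}{j_2}x_1^{j_1}(1-x_1)^{N_1-j_1}x_2^{j_2}(1-x_2)^{N_2-j_2}\,g\!\left(\tfrac{j_1}{N_1},\tfrac{j_2}{N_2}\right).$$ The domain is $D(L_d)=\{f\in E:\ (B_N(f\circ A)-f)/\delta t\to L_d f \text{ in } E \text{ as } N\to\infty\}$. In particular every $u\in D(L_d)$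 vanishes at $(0,0)$ and $(1,1)$; no condition is imposed on the rest of the boundary.
   Formalization: The parameter d ∈ (0,1] is also rational, d = p/q with natural numbers p and q > 0. The paper assumes this as well. *)

From Stdlib Require Import Reals Lra.
From Coquelicot Require Import Coquelicot.
Open Scope R_scope.

(* The square D = [0,1]^2; functions on D are represented as R -> R -> R
   (values outside D are irrelevant). *)
Definition inD (x1 x2 : R) : Prop := 0 <= x1 <= 1 /\ 0 <= x2 <= 1.

Definition contD (f : R -> R -> R) : Prop :=
  forall x1 x2, inD x1 x2 -> forall eps, 0 < eps -> exists delta, 0 < delta /\
    forall y1 y2, inD y1 y2 -> Rabs (y1 - x1) < delta -> Rabs (y2 - x2) < delta ->
      Rabs (f y1 y2 - f x1 x2) < eps.

Definition inE (f : R -> R -> R) : Prop := contD f /\ f 0 0 = 0 /\ f 1 1 = 0.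

Definition bernstein (N1 N2 : nat) (g : R -> R -> R) (x1 x2 : R) : R :=
  sum_f_R0 (fun j1 => sum_f_R0 (fun j2 =>
      Binomial.C N1 j1 * Binomial.C N2 j2 * x1 ^ j1 * (1 - x1) ^ (N1 - j1)
        * x2 ^ j2 * (1 - x2) ^ (N2 - j2)
        * g (INR j1 / INR N1) (INR j2 / INR N2)) N2) N1.

(* A = Id - (kappa/N) M with M = [[d, -d], [-1, 1]] ; (f o A)(x) *)
Definition compA (d kappa : R) (N : nat) (f : R -> R -> R) (x1 x2 : R) : R :=
  f (x1 - kappa / INR N * (d * x1 - d * x2))
    (x2 - kappa / INR N * (- x1 + x2)).

(* Generator relation: f in D(L_d) and L_d f = g, i.e. f, g in E and
   (B_N(f o A) - f)/dt -> g uniformly on D as N -> oo along the N >= 1 with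
   N2 = d N an integer (N1 = N, dt = 1/N). *)
Definition gen (d kappa : R) (f g : R -> R -> R) : Prop :=
  inE f /\ inE g /\
  forall eps, 0 < eps -> exists N0 : nat, forall (N N2 : nat),
    (1 <= N)%nat -> (N0 <= N)%nat -> INR N2 = d * INR N ->
    forall x1 x2, inD x1 x2 ->
      Rabs ((bernstein N N2 (compA d kappa N f) x1 x2 - f x1 x2) / (1 / INR N)
            - g x1 x2) < eps.

Definition inDom (d kappa : R) (f : R -> R -> R) : Prop := exists g, gen d kappa f g.

From Stdlib Require Import Reals Lra Lia.
From Coquelicot Require Import Coquelicot.
From mathcomp Require all_boot all_algebra.
From mathcomp Require all_classical all_reals all_analysis Rstruct Rstruct_topology.
Open Scope R_scope.

(* Since [B_N] is a positive operator reproducing constants and, for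
   [kappa <= N], [A] maps the square into itself, the discrete generator
   [N (B_N (f o A) - f)] is nonnegative at a minimum point of [f] on the
   square. Letting [N -> oo] along the [N] with [d N] an integer (there are
   infinitely many because [d] is rational) gives [L_d f >= 0] there.

   Parabolic case: if [u] were negative somewhere, [u(s, x) + eps s] attains
   a negative minimum over [[0, t] x D] at some time [ts > 0]; there
   [L_d u >= 0], while the left difference quotients in time give
   [u_t <= - eps], contradicting [u_t - L_d u >= 0].

   Elliptic case: perturb [u] by [eps W] with a barrier [W] that vanishes at
   the corners [(0,0)] and [(1,1)], where [u] vanishes too, and satisfies
   [L_d W < 0] everywhere else. The minimum of [u + eps W] is negative, so it
   is not a corner, and there [0 <= L_d u + eps L_d W < 0]. *)

Definition bern_weight (n : nat) (x : R) (j : nat) : R :=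
  Binomial.C n j * x ^ j * (1 - x) ^ (n - j).

Lemma sum_bern_weight n x : sum_f_R0 (bern_weight n x) n = 1.
Proof.
  unfold bern_weight. rewrite <- binomial.
  replace (x + (1 - x)) with 1 by ring. apply pow1.
Qed.

Lemma bern_weight_S m x i : (i <= m)%nat ->
  bern_weight (S m) x (S i) * INR (S i) = INR (S m) * x * bern_weight m x i.
Proof.
  intros Hi. unfold bern_weight, Binomial.C.
  replace (S m - S i)%nat with (m - i)%nat by lia.
  rewrite !fact_simpl, !mult_INR. simpl pow.
  field. repeat split; try apply INR_fact_neq_0. apply not_0_INR. lia.
Qed.

Lemma bern_weight_ge0 n x j : 0 <= x <= 1 -> 0 <= bern_weight n x j.
Proof.
  intros Hx. unfold bern_weight, Binomial.C.
  repeat apply Rmult_le_pos; try (apply pow_le; lra).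
  - apply pos_INR.
  - apply Rlt_le, Rinv_0_lt_compat, Rmult_lt_0_compat; apply INR_fact_lt_0.
Qed.

Lemma sum_bern_weight_mul_id n x :
  sum_f_R0 (fun j => bern_weight n x j * INR j) n = INR n * x.
Proof.
  destruct n as [|m]; [simpl; ring|].
  rewrite decomp_sum by lia. simpl pred.
  rewrite (sum_eq _ (fun i => bern_weight m x i * (INR (S m) * x)))
    by (intros i Hi; rewrite bern_weight_S by exact Hi; ring).
  rewrite <- scal_sum, sum_bern_weight. simpl. ring.
Qed.

Lemma sum_bern_weight_mul_sq n x :
  sum_f_R0 (fun j => bern_weight n x j * INR j * INR j) n
  = INR n * x * (INR (pred n) * x + 1).
Proof.
  destruct n as [|m]; [simpl; ring|].
  rewrite decomp_sum by lia. simpl pred.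
  rewrite (sum_eq _ (fun i =>
      (bern_weight m x i * INR i + bern_weight m x i) * (INR (S m) * x)))
    by (intros i Hi; rewrite bern_weight_S by exact Hi; rewrite (S_INR i); ring).
  rewrite <- scal_sum, plus_sum, sum_bern_weight_mul_id, sum_bern_weight. simpl. ring.
Qed.

Lemma bernstein1_quadratic n x c0 c1 c2 : (1 <= n)%nat ->
  sum_f_R0 (fun j => bern_weight n x j
    * (c0 + c1 * (INR j / INR n) + c2 * (INR j / INR n) ^ 2)) n
  = c0 + c1 * x + c2 * (x ^ 2 + x * (1 - x) / INR n).
Proof.
  intros Hn. assert (HN : INR n <> 0) by (apply not_0_INR; lia).
  rewrite (sum_eq _ (fun j => bern_weight n x j * c0
      + bern_weight n x j * INR j * (c1 / INR n)
      + bern_weight n x j * INR j * INR j * (c2 / INR n ^ 2)))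
    by (intros; field; exact HN).
  rewrite !plus_sum, <- !scal_sum,
    sum_bern_weight, sum_bern_weight_mul_id, sum_bern_weight_mul_sq.
  destruct n as [|m]; [lia|]. simpl pred. rewrite S_INR in *. field. exact HN.
Qed.

Lemma bernstein_quadratic N1 N2 g x1 x2 a0 a1 a2 a11 a12 a22 :
  (1 <= N1)%nat -> (1 <= N2)%nat ->
  (forall y1 y2, g y1 y2
     = a0 + a1 * y1 + a2 * y2 + a11 * y1 ^ 2 + a12 * y1 * y2 + a22 * y2 ^ 2) ->
  bernstein N1 N2 g x1 x2
  = a0 + a1 * x1 + a2 * x2 + a11 * (x1 ^ 2 + x1 * (1 - x1) / INR N1)
    + a12 * x1 * x2 + a22 * (x2 ^ 2 + x2 * (1 - x2) / INR N2).
Proof.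
  intros H1 H2 Hg. unfold bernstein.
  rewrite (sum_eq _ (fun j1 => bern_weight N1 x1 j1 *
     ((a0 + a2 * x2 + a22 * (x2 ^ 2 + x2 * (1 - x2) / INR N2))
      + (a1 + a12 * x2) * (INR j1 / INR N1) + a11 * (INR j1 / INR N1) ^ 2))).
  - rewrite bernstein1_quadratic by exact H1. ring.
  - intros j1 _.
    rewrite (sum_eq _ (fun j2 => bern_weight N2 x2 j2 *
        ((a0 + a1 * (INR j1 / INR N1) + a11 * (INR j1 / INR N1) ^ 2)
         + (a2 + a12 * (INR j1 / INR N1)) * (INR j2 / INR N2)
         + a22 * (INR j2 / INR N2) ^ 2) * bern_weight N1 x1 j1))
      by (intros j2 _; rewrite Hg; unfold bern_weight; ring).
    rewrite <- scal_sum, bernstein1_quadratic by exact H2. ring.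
Qed.

Lemma bernstein_const N1 N2 c x1 x2 : (1 <= N1)%nat -> (1 <= N2)%nat ->
  bernstein N1 N2 (fun _ _ => c) x1 x2 = c.
Proof.
  intros H1 H2. rewrite (bernstein_quadratic _ _ _ _ _ c 0 0 0 0 0) by (auto; intros; ring).
  ring.
Qed.

Lemma bernstein_plus_scal N1 N2 g h c x1 x2 :
  bernstein N1 N2 (fun y1 y2 => g y1 y2 + c * h y1 y2) x1 x2
  = bernstein N1 N2 g x1 x2 + c * bernstein N1 N2 h x1 x2.
Proof.
  unfold bernstein. rewrite scal_sum, <- plus_sum. apply sum_eq; intros j1 _.
  rewrite (Rmult_comm (sum_f_R0 _ N2) c), scal_sum, <- plus_sum.
  apply sum_eq; intros j2 _. ring.
Qed.

Lemma bernstein_le N1 N2 g h x1 x2 : inD x1 x2 ->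
  (forall j1 j2, (j1 <= N1)%nat -> (j2 <= N2)%nat ->
     g (INR j1 / INR N1) (INR j2 / INR N2) <= h (INR j1 / INR N1) (INR j2 / INR N2)) ->
  bernstein N1 N2 g x1 x2 <= bernstein N1 N2 h x1 x2.
Proof.
  intros [Hx1 Hx2] Hgh. unfold bernstein.
  apply sum_Rle; intros j1 Hj1. apply sum_Rle; intros j2 Hj2.
  apply Rmult_le_compat_l; [|apply Hgh; assumption].
  pose proof (bern_weight_ge0 N1 x1 j1 Hx1). pose proof (bern_weight_ge0 N2 x2 j2 Hx2).
  replace (Binomial.C N1 j1 * Binomial.C N2 j2 * x1 ^ j1 * (1 - x1) ^ (N1 - j1)
           * x2 ^ j2 * (1 - x2) ^ (N2 - j2))
    with (bern_weight N1 x1 j1 * bern_weight N2 x2 j2) by (unfold bern_weight; ring).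
  apply Rmult_le_pos; assumption.
Qed.

Lemma compA_inD d t y1 y2 : 0 < d <= 1 -> 0 <= t <= 1 -> inD y1 y2 ->
  inD (y1 - t * (d * y1 - d * y2)) (y2 - t * (- y1 + y2)).
Proof.
  intros Hd Ht [[? ?] [? ?]]. assert (0 <= t * d <= 1) by nra.
  split; split; nra.
Qed.

Lemma grid_in_unit (j N : nat) : (1 <= N)%nat -> (j <= N)%nat -> 0 <= INR j / INR N <= 1.
Proof.
  intros HN Hj. assert (0 < INR N) by (apply lt_0_INR; lia).
  apply le_INR in Hj. pose proof (pos_INR j). split.
  - apply Rdiv_le_0_compat; lra.
  - apply (Rdiv_le_1 (INR j) (INR N)); lra.
Qed.

Lemma admissible_N2_pos d (N N2 : nat) : 0 < d -> (1 <= N)%nat -> INR N2 = d * INR N ->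
  (1 <= N2)%nat.
Proof.
  intros Hd HN HN2. destruct N2; [|lia].
  apply le_INR in HN. simpl in HN, HN2. nra.
Qed.

Definition disc_gen (d kappa : R) (N N2 : nat) (f : R -> R -> R) (x1 x2 : R) : R :=
  (bernstein N N2 (compA d kappa N f) x1 x2 - f x1 x2) / (1 / INR N).

Lemma disc_gen_plus_scal d kappa N N2 f g c x1 x2 : (1 <= N)%nat ->
  disc_gen d kappa N N2 (fun y1 y2 => f y1 y2 + c * g y1 y2) x1 x2
  = disc_gen d kappa N N2 f x1 x2 + c * disc_gen d kappa N N2 g x1 x2.
Proof.
  intros HN. assert (0 < INR N) by (apply lt_0_INR; lia).
  unfold disc_gen, compA. rewrite bernstein_plus_scal. field. lra.
Qed.

Lemma disc_gen_ge0_at_min d kappa N N2 f x1 x2 :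
  0 < d <= 1 -> 0 < kappa -> (1 <= N)%nat -> (1 <= N2)%nat -> kappa <= INR N ->
  inD x1 x2 -> (forall y1 y2, inD y1 y2 -> f x1 x2 <= f y1 y2) ->
  0 <= disc_gen d kappa N N2 f x1 x2.
Proof.
  intros Hd Hk HN HN2 HkN Hx Hmin.
  assert (0 < INR N) by (apply lt_0_INR; lia).
  assert (Hf : f x1 x2 <= bernstein N N2 (compA d kappa N f) x1 x2).
  { rewrite <- (bernstein_const N N2 (f x1 x2) x1 x2 HN HN2).
    apply bernstein_le; [exact Hx|]. intros j1 j2 Hj1 Hj2.
    apply Hmin, compA_inD; auto.
    - split; [apply Rdiv_le_0_compat | apply (Rdiv_le_1 kappa (INR N))]; lra.
    - split; apply grid_in_unit; auto. }
  unfold disc_gen. replace (1 / INR N) with (/ INR N) by (field; lra).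
  unfold Rdiv. rewrite Rinv_inv. apply Rmult_le_pos; lra.
Qed.

Definition gen_at (d kappa : R) (f : R -> R -> R) (a x1 x2 : R) : Prop :=
  forall eps, 0 < eps -> exists N0 : nat, forall N N2 : nat,
    (1 <= N)%nat -> (N0 <= N)%nat -> INR N2 = d * INR N ->
    Rabs (disc_gen d kappa N N2 f x1 x2 - a) < eps.

Lemma gen_at_of_gen d kappa f g x1 x2 : gen d kappa f g -> inD x1 x2 ->
  gen_at d kappa f (g x1 x2) x1 x2.
Proof.
  intros [_ [_ Hconv]] Hx eps Heps. destruct (Hconv eps Heps) as [N0 HN0].
  exists N0. intros N N2 HN HN0' HN2. apply HN0; assumption.
Qed.

Lemma gen_at_plus_scal d kappa f g a b c x1 x2 :
  gen_at d kappa f a x1 x2 -> gen_at d kappa g b x1 x2 ->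
  gen_at d kappa (fun y1 y2 => f y1 y2 + c * g y1 y2) (a + c * b) x1 x2.
Proof.
  intros Hf Hg eps Heps. pose proof (Rabs_pos c).
  destruct (Hf (eps / 2)) as [N1 H1]; [lra|].
  destruct (Hg (eps / (2 * (Rabs c + 1)))) as [N2 H2]; [apply Rdiv_lt_0_compat; lra|].
  exists (Nat.max N1 N2). intros N M HN HNmax HM.
  specialize (H1 N M HN ltac:(lia) HM). specialize (H2 N M HN ltac:(lia) HM).
  rewrite disc_gen_plus_scal by exact HN.
  set (e1 := disc_gen d kappa N M f x1 x2 - a) in *.
  set (e2 := disc_gen d kappa N M g x1 x2 - b) in *.
  replace (_ + c * _ - (a + c * b)) with (e1 + c * e2) by (unfold e1, e2; ring).
  assert (Hce : Rabs c * Rabs e2 <= eps / 2).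
  { apply Rle_trans with ((Rabs c + 1) * (eps / (2 * (Rabs c + 1)))).
    - pose proof (Rabs_pos e2). nra.
    - right. field. lra. }
  pose proof (Rabs_triang e1 (c * e2)). rewrite Rabs_mult in *. lra.
Qed.

Lemma admissible_unbounded d (p q : nat) : (0 < q)%nat -> d = INR p / INR q ->
  forall (N0 : nat) (B : R), exists N N2 : nat,
    (1 <= N)%nat /\ (N0 <= N)%nat /\ INR N2 = d * INR N /\ B < INR N.
Proof.
  intros Hq Hd N0 B. destruct (INR_unbounded B) as [n Hn].
  exists (S (n + N0) * q)%nat, (S (n + N0) * p)%nat.
  assert (Hle : (S (n + N0) <= S (n + N0) * q)%nat) by nia.
  split; [lia|]. split; [lia|]. split.
  - rewrite !mult_INR, Hd. field. apply not_0_INR. lia.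
  - apply le_INR in Hle. assert (INR n < INR (S (n + N0))) by (apply lt_INR; lia). lra.
Qed.

Lemma gen_at_ge0_at_min d kappa p q f a x1 x2 :
  0 < d <= 1 -> 0 < kappa -> (0 < q)%nat -> d = INR p / INR q ->
  gen_at d kappa f a x1 x2 -> inD x1 x2 ->
  (forall y1 y2, inD y1 y2 -> f x1 x2 <= f y1 y2) -> 0 <= a.
Proof.
  intros Hd Hk Hq Hdq Hgen Hx Hmin.
  destruct (Rle_or_lt 0 a) as [|Ha]; [assumption|exfalso].
  destruct (Hgen (- a)) as [N0 HN0]; [lra|].
  destruct (admissible_unbounded d p q Hq Hdq N0 kappa) as [N [N2 [HN [HNN0 [HN2 HkN]]]]].
  specialize (HN0 N N2 HN HNN0 HN2). apply Rabs_def2 in HN0.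
  assert (0 <= disc_gen d kappa N N2 f x1 x2).
  { apply disc_gen_ge0_at_min; try lra; auto.
    apply (admissible_N2_pos d N N2); lra || assumption. }
  lra.
Qed.

(* [x1 + d x2] is conserved by the drift ([(1, d) . M x = 0]), so the
   first-order part of [L_d] only sees the [(x1 - x2)^2] term, which is there
   to make [L_d barrier] negative at [(1,0)] and [(0,1)] as well.
   [barrier_gen d kappa x1 x2 t] is the discrete generator of [barrier] at
   [t = kappa / N]; at [t = 0] it is [L_d barrier]. *)
Definition barrier_quad (d a b : R) : R := d ^ 2 / 2 * (a - b) ^ 2 - (a + d * b) ^ 2.

Definition barrier (d y1 y2 : R) : R := (1 + d) * (y1 + d * y2) + barrier_quad d y1 y2.

Definition barrier_gen (d kappa x1 x2 t : R) : R :=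
  kappa * d ^ 2 * (1 + d) * (x1 - x2) ^ 2 * (t * (1 + d) / 2 - 1)
  + barrier_quad d (1 - t * d) t * (x1 * (1 - x1))
  + barrier_quad d (t * d) (1 - t) * (x2 * (1 - x2)) / d.

Lemma barrier_corners d : barrier d 0 0 = 0 /\ barrier d 1 1 = 0.
Proof. unfold barrier, barrier_quad. split; ring. Qed.

Lemma contD_barrier d : contD (barrier d).
Proof.
  intros x1 x2 _ eps Heps.
  assert (Hc : continuity_2d_pt (barrier d) x1 x2).
  { unfold barrier, barrier_quad. simpl pow.
    repeat first [ apply continuity_2d_pt_plus | apply continuity_2d_pt_minus
                 | apply continuity_2d_pt_mult | apply continuity_2d_pt_const
                 | apply continuity_2d_pt_opp | apply continuity_2d_pt_id1
                 | apply continuity_2d_pt_id2 ]. }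
  destruct (Hc (mkposreal eps Heps)) as [delta Hdelta].
  exists delta. split; [apply cond_pos|]. intros y1 y2 _. apply Hdelta.
Qed.

Lemma disc_gen_barrier d kappa (N N2 : nat) x1 x2 :
  0 < d -> (1 <= N)%nat -> INR N2 = d * INR N ->
  disc_gen d kappa N N2 (barrier d) x1 x2 = barrier_gen d kappa x1 x2 (kappa / INR N).
Proof.
  intros Hd HN HN2. assert (0 < INR N) by (apply lt_0_INR; lia).
  set (t := kappa / INR N).
  set (a11 := barrier_quad d (1 - t * d) t).
  set (a22 := barrier_quad d (t * d) (1 - t)).
  unfold disc_gen.
  rewrite (bernstein_quadratic _ _ _ _ _ 0 (1 + d) (d * (1 + d)) a11
             (- (1 + d) ^ 2 - a11 - a22) a22).
  - unfold barrier_gen, barrier, a11, a22, barrier_quad, t. rewrite HN2. field. lra.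
  - exact HN.
  - apply (admissible_N2_pos d N N2); assumption.
  - intros y1 y2. unfold compA, barrier, a11, a22, barrier_quad, t. field. lra.
Qed.

Lemma gen_at_barrier d kappa x1 x2 : 0 < d -> 0 < kappa ->
  gen_at d kappa (barrier d) (barrier_gen d kappa x1 x2 0) x1 x2.
Proof.
  intros Hd Hk eps Heps.
  assert (Hc : continuity_pt (barrier_gen d kappa x1 x2) 0)
    by (unfold barrier_gen, barrier_quad; reg).
  destruct (proj1 (continuity_pt_locally _ _) Hc (mkposreal eps Heps)) as [delta Hdelta].
  pose proof (cond_pos delta).
  destruct (INR_unbounded (kappa / delta)) as [N0 HN0].
  exists N0. intros N N2 HN HNN0 HN2.
  assert (0 < INR N) by (apply lt_0_INR; lia).
  apply le_INR in HNN0.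
  rewrite disc_gen_barrier by assumption.
  apply Hdelta. unfold ball; simpl; unfold AbsRing_ball, abs, minus, plus, opp; simpl.
  rewrite Ropp_0, Rplus_0_r, Rabs_pos_eq by (apply Rdiv_le_0_compat; lra).
  apply Rlt_div_l; [lra|].
  apply (Rmult_lt_reg_r (/ delta)); [apply Rinv_0_lt_compat; lra|].
  replace (delta * INR N * / delta) with (INR N) by (field; lra). unfold Rdiv in HN0. lra.
Qed.

Lemma barrier_gen0_lt0 d kappa x1 x2 : 0 < d <= 1 -> 0 < kappa -> inD x1 x2 ->
  ~ (x1 = 0 /\ x2 = 0) -> ~ (x1 = 1 /\ x2 = 1) -> barrier_gen d kappa x1 x2 0 < 0.
Proof.
  intros Hd Hk [[? ?] [? ?]] Hc0 Hc1.
  replace (barrier_gen d kappa x1 x2 0)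
    with (- (kappa * d ^ 2 * (1 + d)) * (x1 - x2) ^ 2
          - (1 - d ^ 2 / 2) * (x1 * (1 - x1)) - d / 2 * (x2 * (1 - x2)))
    by (unfold barrier_gen, barrier_quad; field; lra).
  assert (0 < d ^ 2) by (apply pow_lt; lra).
  assert (0 < kappa * d ^ 2 * (1 + d)) by (apply Rmult_lt_0_compat; [nra | lra]).
  assert (1 / 2 <= 1 - d ^ 2 / 2) by nra.
  assert (0 <= x1 * (1 - x1)) by nra. assert (0 <= x2 * (1 - x2)) by nra.
  destruct (Req_dec x1 x2) as [<-|Hne].
  - assert (x1 * (1 - x1) <> 0) by (intros Hz; apply Rmult_integral in Hz;
      destruct Hz; [apply Hc0 | apply Hc1]; split; lra).
    nra.
  - assert (0 < (x1 - x2) ^ 2) by (apply pow2_gt_0; lra).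
    nra.
Qed.

Definition contTD (T : R) (f : R -> R -> R -> R) : Prop :=
  forall t x1 x2, 0 <= t <= T -> inD x1 x2 -> forall eps, 0 < eps ->
    exists delta, 0 < delta /\ forall s y1 y2, 0 <= s <= T -> inD y1 y2 ->
      Rabs (s - t) < delta -> Rabs (y1 - x1) < delta -> Rabs (y2 - x2) < delta ->
      Rabs (f s y1 y2 - f t x1 x2) < eps.

Definition is_min_TD (T : R) (f : R -> R -> R -> R) (t x1 x2 : R) : Prop :=
  (0 <= t <= T) /\ inD x1 x2 /\
  forall s y1 y2, 0 <= s <= T -> inD y1 y2 -> f t x1 x2 <= f s y1 y2.

Module Extremum.
Import all_boot all_algebra all_classical all_reals all_analysis.
Import Rstruct Rstruct_topology Num.Theory.

Lemma contTD_attains_min (T : R) (f : R -> R -> R -> R) :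
  Rle 0 T -> contTD T f -> exists t x1 x2, is_min_TD T f t x1 x2.
Proof.
move=> T0 fc.
pose F (p : R * (R * R)) := f p.1 p.2.1 p.2.2.
pose A : set (R * (R * R)) := (`[0%R, T] `*` (`[0%R, 1%R] `*` `[0%R, 1%R]))%classic.
have inAP s y1 y2 : A (s, (y1, y2)) <-> (Rle 0 s /\ Rle s T) /\ inD y1 y2.
  rewrite /A /= !in_itv /=.
  split => [[/andP[? ?] [/andP[? ?] /andP[? ?]]] | [[? ?] [[? ?] [? ?]]]].
    by split; [|split]; split; apply/RleP.
  by split; [|split]; apply/andP; split; apply/RleP.
have cA : compact A.
  by apply: compact_setX; [|apply: compact_setX]; exact: segment_compact.
have A0 : (A !=set0)%classic.
  exists (0%R, (0%R, 0%R)); apply/inAP.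
  by split; [split; [exact: Rle_refl|] | split; split; exact: Rle_refl || exact: Rle_0_1].
have cF : continuous (from_subspace A F).
  apply/subspace_continuousP => -[t [x1 x2]] /inAP [tT x12].
  apply/(@cvgrPdist_lt _ R^o) => e /RltP e0.
  have [del [del0 Hdel]] := fc t x1 x2 tT x12 e e0.
  apply/nbhs_ballP; exists del; first exact/RltP.
  move=> [s [y1 y2]] /= [/= b1 [/= b2 b3]] /inAP [sT y12].
  have dist_lt a b : ball a del b -> Rlt (Rabs (Rminus b a)) del.
    by rewrite /ball /= distrC -RabsE => /RltP.
  rewrite /from_subspace /F /= distrC -RabsE; apply/RltP.
  by apply: Hdel => //; apply: dist_lt.
have [[t [x1 x2]] /set_mem /inAP [tT x12] Fmin] := compact_EVT_min A0 cA cF.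
exists t, x1, x2; split; [exact: tT | split; [exact: x12|]].
move=> s y1 y2 sT y12; apply/RleP.
by apply: (Fmin (s, (y1, y2))); apply/mem_set/inAP.
Qed.
End Extremum.

Lemma contD_plus_scal f g c : contD f -> contD g ->
  contD (fun y1 y2 => f y1 y2 + c * g y1 y2).
Proof.
  intros Hf Hg x1 x2 Hx eps Heps. pose proof (Rabs_pos c).
  destruct (Hf x1 x2 Hx (eps / 2)) as [d1 [Hd1 H1]]; [lra|].
  destruct (Hg x1 x2 Hx (eps / (2 * (Rabs c + 1)))) as [d2 [Hd2 H2]];
    [apply Rdiv_lt_0_compat; lra|].
  exists (Rmin d1 d2). split; [apply Rmin_pos; assumption|].
  intros y1 y2 Hy Hy1 Hy2.
  pose proof (Rmin_l d1 d2). pose proof (Rmin_r d1 d2).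
  specialize (H1 y1 y2 Hy ltac:(lra) ltac:(lra)).
  specialize (H2 y1 y2 Hy ltac:(lra) ltac:(lra)).
  set (e1 := f y1 y2 - f x1 x2) in *. set (e2 := g y1 y2 - g x1 x2) in *.
  replace (_ + c * _ - _) with (e1 + c * e2) by (unfold e1, e2; ring).
  assert (Hce : Rabs c * Rabs e2 <= eps / 2).
  { apply Rle_trans with ((Rabs c + 1) * (eps / (2 * (Rabs c + 1)))).
    - pose proof (Rabs_pos e2). nra.
    - right. field. lra. }
  pose proof (Rabs_triang e1 (c * e2)). rewrite Rabs_mult in *. lra.
Qed.

Lemma contD_attains_min f : contD f ->
  exists x1 x2, inD x1 x2 /\ forall y1 y2, inD y1 y2 -> f x1 x2 <= f y1 y2.
Proof.
  intros Hf.
  destruct (Extremum.contTD_attains_min 0 (fun _ => f) (Rle_refl 0))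
    as [t [x1 [x2 [_ [Hx Hmin]]]]].
  - intros t x1 x2 _ Hx eps Heps. destruct (Hf x1 x2 Hx eps Heps) as [delta [Hdelta H]].
    exists delta. split; [exact Hdelta|]. intros s y1 y2 _ Hy _. apply H, Hy.
  - exists x1, x2. split; [exact Hx|]. intros y1 y2 Hy. apply (Hmin 0); [lra | exact Hy].
Qed.

Lemma contTD_of_unif_time T u :
  (forall t, 0 <= t -> contD (u t)) ->
  (forall t, 0 <= t -> forall eps, 0 < eps -> exists delta, 0 < delta /\
     forall s, 0 <= s -> Rabs (s - t) < delta ->
       forall x1 x2, inD x1 x2 -> Rabs (u s x1 x2 - u t x1 x2) < eps) ->
  contTD T u.
Proof.
  intros Hspace Htime t x1 x2 [Ht _] Hx eps Heps.
  destruct (Htime t Ht (eps / 2)) as [d1 [Hd1 H1]]; [lra|].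
  destruct (Hspace t Ht x1 x2 Hx (eps / 2)) as [d2 [Hd2 H2]]; [lra|].
  exists (Rmin d1 d2). split; [apply Rmin_pos; assumption|].
  intros s y1 y2 [Hs _] Hy Hst Hy1 Hy2.
  pose proof (Rmin_l d1 d2). pose proof (Rmin_r d1 d2).
  specialize (H1 s Hs ltac:(lra) y1 y2 Hy).
  specialize (H2 y1 y2 Hy ltac:(lra) ltac:(lra)).
  pose proof (Rabs_triang (u s y1 y2 - u t y1 y2) (u t y1 y2 - u t x1 x2)).
  replace (u s y1 y2 - u t x1 x2)
    with (u s y1 y2 - u t y1 y2 + (u t y1 y2 - u t x1 x2)) by ring.
  lra.
Qed.

Lemma contTD_plus_time T f c : contTD T f ->
  contTD T (fun s y1 y2 => f s y1 y2 + c * s).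
Proof.
  intros Hf t x1 x2 Ht Hx eps Heps. pose proof (Rabs_pos c).
  destruct (Hf t x1 x2 Ht Hx (eps / 2)) as [d1 [Hd1 H1]]; [lra|].
  set (d2 := eps / (2 * (Rabs c + 1))).
  assert (Hd2 : 0 < d2) by (apply Rdiv_lt_0_compat; lra).
  exists (Rmin d1 d2). split; [apply Rmin_pos; assumption|].
  intros s y1 y2 Hs Hy Hst Hy1 Hy2.
  pose proof (Rmin_l d1 d2). pose proof (Rmin_r d1 d2).
  specialize (H1 s y1 y2 Hs Hy ltac:(lra) ltac:(lra) ltac:(lra)).
  replace (f s y1 y2 + c * s - (f t x1 x2 + c * t))
    with (f s y1 y2 - f t x1 x2 + c * (s - t)) by ring.
  assert (Hct : Rabs c * Rabs (s - t) <= eps / 2).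
  { apply Rle_trans with ((Rabs c + 1) * d2).
    - pose proof (Rabs_pos (s - t)). nra.
    - right. unfold d2. field. lra. }
  pose proof (Rabs_triang (f s y1 y2 - f t x1 x2) (c * (s - t))).
  rewrite Rabs_mult in *. lra.
Qed.

Lemma is_derive_le0_at_left_min f t l r : is_derive f t l -> 0 < r ->
  (forall s, t - r < s <= t -> f t <= f s) -> l <= 0.
Proof.
  intros Hd Hr Hmin. destruct (Rle_or_lt l 0) as [|Hl]; [assumption|exfalso].
  apply is_derive_Reals in Hd. destruct (Hd l Hl) as [delta Hdelta].
  pose proof (cond_pos delta).
  set (h := - Rmin (delta / 2) (r / 2)).
  pose proof (Rmin_l (delta / 2) (r / 2)). pose proof (Rmin_r (delta / 2) (r / 2)).
  assert (Hh : h < 0) by (unfold h; apply Ropp_lt_gt_0_contravar, Rmin_pos; lra).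
  specialize (Hdelta h ltac:(lra)).
  assert (Hhd : Rabs h < delta) by (rewrite Rabs_left by exact Hh; unfold h in *; lra).
  specialize (Hdelta Hhd). apply Rabs_def2 in Hdelta.
  assert (Hq : (f (t + h) - f t) / h <= 0).
  { apply Rmult_le_reg_r with (- h); [lra|].
    replace ((f (t + h) - f t) / h * - h) with (f t - f (t + h)) by (field; lra).
    specialize (Hmin (t + h) ltac:(unfold h in *; lra)). lra. }
  lra.
Qed.

Lemma elliptic_min_principle d kappa (p q : nat) u Lu :
  0 < d <= 1 -> 0 < kappa -> (0 < q)%nat -> d = INR p / INR q ->
  gen d kappa u Lu -> (forall x1 x2, inD x1 x2 -> - Lu x1 x2 >= 0) ->
  forall x1 x2, inD x1 x2 -> u x1 x2 >= 0.
Proof.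
  intros Hd Hk Hq Hdq Hgen HLu x1 x2 Hx.
  destruct (Rlt_or_le (u x1 x2) 0) as [Hneg|]; [exfalso|lra].
  pose proof Hgen as [[Hcu [Hu00 Hu11]] _].
  pose proof (Rabs_pos (barrier d x1 x2)). pose proof (Rle_abs (barrier d x1 x2)).
  set (eps := - u x1 x2 / (2 * (Rabs (barrier d x1 x2) + 1))).
  assert (Heps : 0 < eps) by (apply Rdiv_lt_0_compat; lra).
  assert (eps * (Rabs (barrier d x1 x2) + 1) = - u x1 x2 / 2) by (unfold eps; field; lra).
  set (v := fun y1 y2 => u y1 y2 + eps * barrier d y1 y2).
  destruct (contD_attains_min v (contD_plus_scal _ _ eps Hcu (contD_barrier d)))
    as [xs1 [xs2 [Hxs Hmin]]].
  assert (Hvs : v xs1 xs2 < 0) by (specialize (Hmin x1 x2 Hx); unfold v in *; nra).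
  assert (Hbarrier : barrier_gen d kappa xs1 xs2 0 < 0).
  { destruct (barrier_corners d) as [W00 W11].
    apply barrier_gen0_lt0; auto; intros [-> ->]; unfold v in Hvs;
      [rewrite Hu00, W00 in Hvs | rewrite Hu11, W11 in Hvs]; lra. }
  assert (Hgen_v : 0 <= Lu xs1 xs2 + eps * barrier_gen d kappa xs1 xs2 0).
  { apply (gen_at_ge0_at_min d kappa p q v _ xs1 xs2); auto.
    apply gen_at_plus_scal; [apply gen_at_of_gen; assumption | apply gen_at_barrier; lra]. }
  specialize (HLu xs1 xs2 Hxs). nra.
Qed.

Lemma parabolic_min_principle d kappa (p q : nat) u Lu :
  0 < d <= 1 -> 0 < kappa -> (0 < q)%nat -> d = INR p / INR q ->
  (forall t, 0 <= t -> gen d kappa (u t) (Lu t)) ->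
  (forall t, 0 <= t -> forall eps, 0 < eps -> exists delta, 0 < delta /\
     forall s, 0 <= s -> Rabs (s - t) < delta ->
       forall x1 x2, inD x1 x2 -> Rabs (u s x1 x2 - u t x1 x2) < eps) ->
  (forall t, 0 < t -> forall x1 x2, inD x1 x2 ->
     exists ut, is_derive (fun s => u s x1 x2) t ut /\ ut - Lu t x1 x2 >= 0) ->
  (forall x1 x2, inD x1 x2 -> u 0 x1 x2 >= 0) ->
  forall t, 0 <= t -> forall x1 x2, inD x1 x2 -> u t x1 x2 >= 0.
Proof.
  intros Hd Hk Hq Hdq Hgen Hcont Hder H0 t Ht x1 x2 Hx.
  destruct (Rlt_or_le (u t x1 x2) 0) as [Hneg|]; [exfalso|lra].
  set (eps := - u t x1 x2 / (2 * (t + 1))).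
  assert (Heps : 0 < eps) by (apply Rdiv_lt_0_compat; lra).
  assert (eps * (t + 1) = - u t x1 x2 / 2) by (unfold eps; field; lra).
  set (v := fun s y1 y2 => u s y1 y2 + eps * s).
  assert (Hvc : contTD t v).
  { apply contTD_plus_time, contTD_of_unif_time; [|exact Hcont].
    intros s Hs. apply (Hgen s Hs). }
  destruct (Extremum.contTD_attains_min t v Ht Hvc)
    as [ts [xs1 [xs2 [[Hts0 HtsT] [Hxs Hmin]]]]].
  assert (Hvs : v ts xs1 xs2 < 0).
  { specialize (Hmin t x1 x2 (conj Ht (Rle_refl t)) Hx). unfold v in *. nra. }
  assert (Hts : 0 < ts).
  { destruct Hts0 as [|<-]; [assumption|]. specialize (H0 xs1 xs2 Hxs). unfold v in Hvs. lra. }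
  assert (HLu : 0 <= Lu ts xs1 xs2).
  { apply (gen_at_ge0_at_min d kappa p q (u ts) _ xs1 xs2); auto.
    - apply gen_at_of_gen; [apply Hgen; lra | exact Hxs].
    - intros y1 y2 Hy. specialize (Hmin ts y1 y2 (conj Hts0 HtsT) Hy). unfold v in Hmin. lra. }
  destruct (Hder ts Hts xs1 xs2 Hxs) as [ut [Hut Hgap]].
  assert (ut + eps <= 0).
  { apply (is_derive_le0_at_left_min (fun s => v s xs1 xs2) ts _ ts); [|exact Hts|].
    - apply (is_derive_plus (fun s => u s xs1 xs2) (fun s => eps * s)); [exact Hut|].
      auto_derive; [exact I | ring].
    - intros s Hs. apply Hmin; [lra | exact Hxs]. }
  lra.
Qed.

Theorem theorem2 (d kappa : R)
  (hd : 0 < d <= 1) (hkappa : 0 < kappa)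
  (hdrat : exists p q : nat, (0 < q)%nat /\ d = INR p / INR q) :
  (* parabolic version *)
  (forall (u : R -> R -> R -> R) (Lu : R -> R -> R -> R),
     (forall t, 0 <= t -> gen d kappa (u t) (Lu t)) ->
     (forall t, 0 <= t -> forall eps, 0 < eps -> exists delta, 0 < delta /\
        forall s, 0 <= s -> Rabs (s - t) < delta ->
          forall x1 x2, inD x1 x2 -> Rabs (u s x1 x2 - u t x1 x2) < eps) ->
     (forall t, 0 < t -> forall x1 x2, inD x1 x2 ->
        exists ut, is_derive (fun s => u s x1 x2) t ut /\ ut - Lu t x1 x2 >= 0) ->
     (forall x1 x2, inD x1 x2 -> u 0 x1 x2 >= 0) ->
     forall t, 0 <= t -> forall x1 x2, inD x1 x2 -> u t x1 x2 >= 0)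
  /\
  (* elliptic version *)
  (forall (u Lu : R -> R -> R),
     gen d kappa u Lu ->
     (forall x1 x2, inD x1 x2 -> - Lu x1 x2 >= 0) ->
     forall x1 x2, inD x1 x2 -> u x1 x2 >= 0).
Proof.
  destruct hdrat as [p [q [Hq Hdq]]]. split.
  - intros u Lu. exact (parabolic_min_principle d kappa p q u Lu hd hkappa Hq Hdq).
  - intros u Lu. exact (elliptic_min_principle d kappa p q u Lu hd hkappa Hq Hdq).
Qed.
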